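(* The structure $\mathbb{C}_2=(\{0,1\};\neq,\{0\},\{1\})$ pp-constructs the structure $\mathbb{H}=(\{0,1,2\};\mu_2,\tau_0,\tau_1,\psi_2',\rho_2,\{0,2\},\{1,2\},\{0\},\{1\},\{2\})$.
   Context: Relations on $\{0,1,2\}$: $\mu_2$ is the equivalence relation with classes $\{0,1\},\{2\}$; $\rho_2=\{0,1,2\}^2\setminus\mu_2$; $\psi_2'=\{(0,1),(1,0)\}$; $\tau_0=\{(0,0),(1,0),(2,1)\}$; $\tau_1=\{(0,1),(1,1),(2,0)\}$. A relation is pp-definable in $\mathbb{A}$ if definable by a formula using the relations of $\mathbb{A}$, equality, conjunction and existential quantification. A pp-power of $\mathbb{A}$ is a structure isomorphic to one with domain $A^n$ whose $k$-ary relations, viewed as $kn$-ary relations on $A$, are pp-definable in $\mathbb{A}$. $\mathbb{A}$ pp-constructs $\mathbb{B}$ if $\mathbb{B}$ is homomorphically equivalent (homomorphisms in both directions) to a pp-power of $\mathbb{A}$. *)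

From mathcomp Require Import all_boot.

Set Implicit Arguments.
Unset Strict Implicit.
Unset Printing Implicit Defensive.

Definition arity (sig : seq nat) (i : 'I_(size sig)) : nat := nth 0 sig i.

(* A relational structure of signature sig: a domain and, for each relation
   symbol i, a relation given as a predicate on tuples (lists); only lists of
   length [arity sig i] are ever consulted. *)
Record struct (sig : seq nat) := Struct {
  dom : Type;
  rel : 'I_(size sig) -> seq dom -> Prop
}.
Arguments Struct {sig} dom rel.
Arguments dom {sig} s.
Arguments rel {sig} s i _.

Definition is_hom (sig : seq nat) (A B : struct sig) (f : dom A -> dom B) : Prop :=
  forall (i : 'I_(size sig)) (s : seq (dom A)),
    size s = arity i -> rel A i s -> rel B i (map f s).

Definition hom_equiv (sig : seq nat) (A B : struct sig) : Prop :=
  (exists f : dom A -> dom B, is_hom f) /\ (exists g : dom B -> dom A, is_hom g).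

Inductive ppf (sig : seq nat) : Type :=
| PPEq  of nat & nat
| PPRel (i : 'I_(size sig)) (xs : seq nat)
| PPAnd of ppf sig & ppf sig
| PPEx  of nat & ppf sig.

Fixpoint sat (sig : seq nat) (A : struct sig) (env : nat -> dom A) (f : ppf sig)
  : Prop :=
  match f with
  | PPEq x y => env x = env y
  | PPRel i xs => size xs = arity i /\ rel A i (map env xs)
  | PPAnd f g => sat env f /\ sat env g
  | PPEx x f => exists a : dom A, sat (fun y => if y == x then a else env y) f
  end.

Definition pp_definable (sig : seq nat) (A : struct sig) (m : nat)
  (Q : seq (dom A) -> Prop) : Prop :=
  exists (phi : ppf sig) (xs : seq nat),
    size xs = m /\
    forall s : seq (dom A), size s = m ->
      (Q s <-> exists env : nat -> dom A, map env xs = s /\ sat env phi).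

Arguments pp_definable {sig} A m Q.

Definition pp_power_rels (sig : seq nat) (A : struct sig) (sig' : seq nat)
  (n : nat) (R : 'I_(size sig') -> seq (n.-tuple (dom A)) -> Prop) : Prop :=
  forall i : 'I_(size sig'),
    exists Q : seq (dom A) -> Prop,
      pp_definable A (arity i * n) Q /\
      forall t : seq (n.-tuple (dom A)), size t = arity i ->
        (R i t <-> Q (flatten (map val t))).

Arguments pp_power_rels {sig} A {sig'} n R.

(* A pp-constructs B: B is homomorphically equivalent to a pp-power of A.
   (Isomorphic copies are absorbed since isomorphisms compose with
   homomorphisms.) *)
Definition pp_constructs (sig : seq nat) (A : struct sig) (sig' : seq nat)
  (B : struct sig') : Prop :=
  exists (n : nat) (R : 'I_(size sig') -> seq (n.-tuple (dom A)) -> Prop),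
    0 < n /\ pp_power_rels A n R /\
    hom_equiv B (Struct (n.-tuple (dom A)) R).

Arguments pp_constructs {sig} A {sig'} B.

Definition sigC2 : seq nat := [:: 2; 1; 1].
Definition C2 : struct sigC2 :=
  Struct 'I_2 (fun i s =>
    match val i, map val s with
    | 0, [:: a; b] => a <> b
    | 1, [:: a] => a = 0
    | 2, [:: a] => a = 1
    | _, _ => False
    end).

Definition sigH : seq nat := [:: 2; 2; 2; 2; 2; 1; 1; 1; 1; 1].
Definition H : struct sigH :=
  Struct 'I_3 (fun i s =>
    match val i, map val s with
    | 0, [:: a; b] => (a == 2) = (b == 2)
    | 1, [:: a; b] => (a, b) \in [:: (0, 0); (1, 0); (2, 1)]
    | 2, [:: a; b] => (a, b) \in [:: (0, 1); (1, 1); (2, 0)]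
    | 3, [:: a; b] => (a, b) \in [:: (0, 1); (1, 0)]
    | 4, [:: a; b] => (a == 2) <> (b == 2)
    | 5, [:: a] => a \in [:: 0; 2]
    | 6, [:: a] => a \in [:: 1; 2]
    | 7, [:: a] => a = 0
    | 8, [:: a] => a = 1
    | 9, [:: a] => a = 2
    | _, _ => False
    end).

From Pilot Require Import Defs.
From mathcomp Require Import all_boot.

Set Implicit Arguments.
Unset Strict Implicit.
Unset Printing Implicit Defensive.

(* Code a in {0,1,2} by the pair ([a = 2], [a = 1]) in {0,1}^2 and decode
   (x, y) as 2 if x = 1 and as y otherwise.  In these coordinates every
   relation of H is a conjunction of equalities, disequalities and constants
   of C_2 (mu_2, for instance, says that the first coordinates agree), so these
   conjunctions define a pp-square of C_2.  Coding is a homomorphism from H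
   into it, and decoding, which sends the spare point (1, 1) to 2, is one
   back; both are finite checks. *)

Section Formulas.
Variable sig : seq nat.

Fixpoint vars_below (m : nat) (f : ppf sig) : bool :=
  match f with
  | PPEq x y => (x < m) && (y < m)
  | PPRel _ xs => all (fun x => x < m) xs
  | PPAnd f g => vars_below m f && vars_below m g
  | PPEx _ f => vars_below m f
  end.

Lemma sat_env_below (A : struct sig) m (f : ppf sig) (e e' : nat -> dom A) :
  vars_below m f -> {in gtn m, e =1 e'} -> sat e f <-> sat e' f.
Proof.
elim: f e e' => [x y | i xs | f IHf g IHg | x f IHf] e e' /= hf ee'.
- by case/andP: hf => hx hy; rewrite !ee'.
- suff -> : map e xs = map e' xs by [].
  by apply/eq_in_map => z /(allP hf); apply: ee'.
- case/andP: hf => /IHf hf /IHg hg.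
  by split=> -[/(hf _ _ ee') ? /(hg _ _ ee') ?].
- split=> -[a ha]; exists a; apply: (IHf _ _ hf _).1 ha => z hz /=;
    by case: eqP => // _; rewrite ee'.
Qed.

Lemma pp_definable_sat (A : struct sig) m (a0 : dom A) (f : ppf sig) :
  vars_below m f -> pp_definable A m (fun s => sat (nth a0 s) f).
Proof.
move=> hf; exists f, (iota 0 m); split=> [|s hs]; first exact: size_iota.
split=> [hsat | [e [hes hsat]]].
  by exists (nth a0 s); split=> //; rewrite -hs; exact: mkseq_nth.
apply: (sat_env_below hf _).1 hsat => x hx.
by rewrite -hes (nth_map 0) ?size_iota // nth_iota.
Qed.

End Formulas.

(* [a0] is only the default of [nth]: with [vars_below] the formulas never
   read past the flattened tuple. *)
Definition pp_power (sig : seq nat) (A : struct sig) (sig' : seq nat) (n : nat)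
    (a0 : dom A) (phi : 'I_(size sig') -> ppf sig) : struct sig' :=
  Struct (n.-tuple (dom A))
    (fun i t => sat (nth a0 (flatten (map val t))) (phi i)).

Lemma pp_constructs_pp_power (sig : seq nat) (A : struct sig) (sig' : seq nat)
    (B : struct sig') n (a0 : dom A) (phi : 'I_(size sig') -> ppf sig) :
  0 < n -> (forall i, vars_below (arity i * n) (phi i)) ->
  hom_equiv B (pp_power n a0 phi) -> pp_constructs A B.
Proof.
move=> n_gt0 phi_below hBP; exists n, (Defs.rel (pp_power n a0 phi)).
split=> //; split=> // i.
by exists (fun s => sat (nth a0 s) (phi i)); split=> //; apply: pp_definable_sat.
Qed.

Section DecidableSat.
Variables (sig : seq nat) (T : finType) (R : 'I_(size sig) -> seq T -> Prop).
Variable Rb : 'I_(size sig) -> pred (seq T).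
Hypothesis RbP : forall i s, reflect (R i s) (Rb i s).

Fixpoint satb (e : nat -> T) (f : ppf sig) : bool :=
  match f with
  | PPEq x y => e x == e y
  | PPRel i xs => (size xs == arity i) && Rb i (map e xs)
  | PPAnd f g => satb e f && satb e g
  | PPEx x f => [exists a, satb (fun y => if y == x then a else e y) f]
  end.

Lemma satP e f : reflect (sat (A := Struct T R) e f) (satb e f).
Proof.
elim: f e => [x y | i xs | f IHf g IHg | x f IHf] e /=.
- exact: eqP.
- by apply: (iffP andP) => -[/eqP ? /RbP ?].
- by apply: (iffP andP) => -[/IHf ? /IHg ?].
- by apply: (iffP existsP) => -[a /IHf ?]; exists a.
Qed.

End DecidableSat.

Definition relC2b (i : 'I_(size sigC2)) (s : seq 'I_2) : bool :=
  match val i, map val s with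
  | 0, [:: a; b] => a != b
  | 1, [:: a] => a == 0
  | 2, [:: a] => a == 1
  | _, _ => false
  end.

Lemma relC2P i s : reflect (Defs.rel C2 i s) (relC2b i s).
Proof.
rewrite /relC2b /=; case: (val i) (map val s) => [|[|[|?]]] [|a [|b [|? ?]]];
  by [apply: (iffP idP) => /eqP | exact: eqP | exact: ReflectF].
Qed.

Definition neqC2 (x y : nat) : ppf sigC2 :=
  PPRel (@Ordinal (size sigC2) 0 isT) [:: x; y].
Definition zeroC2 (x : nat) : ppf sigC2 :=
  PPRel (@Ordinal (size sigC2) 1 isT) [:: x].
Definition oneC2 (x : nat) : ppf sigC2 :=
  PPRel (@Ordinal (size sigC2) 2 isT) [:: x].

(* Variables 2k and 2k + 1 hold the code of the k-th argument. *)
Definition phiH (i : 'I_(size sigH)) : ppf sigC2 :=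
  match val i with
  | 0 => PPEq _ 0 2
  | 1 => PPAnd (zeroC2 2) (PPEq _ 3 0)
  | 2 => PPAnd (zeroC2 2) (neqC2 3 0)
  | 3 => PPAnd (zeroC2 0) (PPAnd (zeroC2 2) (neqC2 1 3))
  | 4 => neqC2 0 2
  | 5 => zeroC2 1
  | 6 => neqC2 0 1
  | 7 => PPAnd (zeroC2 0) (zeroC2 1)
  | 8 => PPAnd (zeroC2 0) (oneC2 1)
  | _ => PPAnd (oneC2 0) (zeroC2 1)
  end.

Definition bit (b : bool) : 'I_2 := if b then ord_max else ord0.

Definition encode (a : 'I_3) : 2.-tuple 'I_2 :=
  [tuple bit (val a == 2); bit (val a == 1)].

Definition decode (t : 2.-tuple 'I_2) : 'I_3 :=
  if val (tnth t ord0) == 1 then ord_max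
  else widen_ord (leqnSn 2) (tnth t ord_max).

Definition C2_pp_square : struct sigH := pp_power (A := C2) 2 ord0 phiH.

(* With [satP] the C_2 side becomes boolean, so once every argument is split
   into concrete values both sides evaluate and [//] closes the goal. *)
Lemma encode_hom : @is_hom sigH H C2_pp_square encode.
Proof.
move=> i s hs hH; apply/(satP relC2P); move: i s hs hH.
by move=> [[|[|[|[|[|[|[|[|[|[|?]]]]]]]]]] ?] //
  [|[[|[|[|?]]] ?] [|[[|[|[|?]]] ?] []]].
Qed.

Lemma decode_hom : @is_hom sigH C2_pp_square H decode.
Proof.
move=> i s hs /(satP relC2P); move: i s hs.
move=> [[|[|[|[|[|[|[|[|[|[|?]]]]]]]]]] ?] // [|t [|u []]] //.
all: case: t => -[|[[|[|?]] ?] [|[[|[|?]] ?] []]] ? //.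
all: by case: u => -[|[[|[|?]] ?] [|[[|[|?]] ?] []]] ?.
Qed.

Theorem lemma6p3 : pp_constructs C2 H.
Proof.
apply: (@pp_constructs_pp_power _ C2 _ H 2 ord0 phiH) => //.
  by case=> -[|[|[|[|[|[|[|[|[|[|?]]]]]]]]]] ?.
by split; [exists encode; exact: encode_hom | exists decode; exact: decode_hom].
Qed.
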